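(* Let $\mathcal{E}$ be a finite-dimensional real inner product space, $\mathcal{K}\subseteq\mathcal{E}$ a closed convex cone, $A:\mathbb{R}^m\to\mathcal{E}$ linear with adjoint $A^*$, $c\in\mathcal{E}$, $b\in\mathbb{R}^m$. Consider (P): maximize $\langle b,y\rangle$ s.t. $c-Ay\in\mathcal{K}$; (D): minimize $\langle c,x\rangle$ s.t. $A^*x=b$, $x\in\mathcal{K}^*$. Let $s_0,\dots,s_{N-1}\in\mathcal{E}$ and faces $\mathcal{F}_0=\mathcal{K}$, $\mathcal{F}_{i+1}=\mathcal{F}_i\cap s_i^{\perp}$ satisfy $\langle c,s_i\rangle=0$, $A^*s_i=0$, $s_i\in\mathcal{F}_i^*\setminus\mathcal{F}_i^{\perp}$ for $i=0,\dots,N-1$, and put $\mathcal{F}=\mathcal{F}_N$. Consider (R/P): maximize $\langle b,y\rangle$ s.t. $c-Ay\in\mathcal{F}$; (R/D): minimize $\langle c,x\rangle$ s.t. $A^*x=b$, $x\in\mathcal{F}^*$. The recovery procedure takes an optimal solution $x$ of (R/D) and, for $i=N-1$ down to $0$, finds (if one exists) $\alpha\in\mathbb{R}$ with $x+\alpha s_i\in\mathcal{F}_i^*$ and replaces $x$ by $x+\alpha s_i$; if for some $i$ no such $\alpha$ exists it reports failure, otherwise it outputs the final $x$ and is said to succeed. Then: (1) If $\mathcal{F}_i^*+\operatorname{lin}s_i$ is closed for every $i=0,\dots,N-1$, the procedure succeeds and outputs an optimal solution of (D). (2) Suppose $y$ is an optimal solution of (R/P) and $x$ is an optimal solution of (R/D)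 with $\langle c,x\rangle=\langle b,y\rangle$. If the procedure succeeds on input $x$, then (P) and (D) have optimal solutions with zero duality gap.
   Context: $\mathcal{K}^*=\{z:\langle z,x\rangle\ge0\ \forall x\in\mathcal{K}\}$ is the dual cone; $\mathcal{F}^{\perp}$ is the orthogonal complement of the span of $\mathcal{F}$; $s^{\perp}=\{x:\langle s,x\rangle=0\}$; $\operatorname{lin}s$ is the line spanned by $s$. *)

(* The finite-dimensional real inner product space E is modelled as
   'cV[R]_n with the standard dot product (every such space is isometric
   to this one); R^m is 'cV[R]_m.  A linear map R^m -> E is a matrix
   A : 'M[R]_(n, m), acting by y |-> A *m y; its adjoint is A^T. *)
From HB Require Import structures.
From mathcomp Require Import all_boot all_order all_algebra.
From mathcomp Require Import all_classical all_reals all_analysis.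
Set Implicit Arguments. Unset Strict Implicit. Unset Printing Implicit Defensive.
Import Order.TTheory GRing.Theory Num.Theory.
Import numFieldNormedType.Exports.
Local Open Scope ring_scope.
Local Open Scope classical_set_scope.

Section Defs.
Variable R : realType.

Definition ip (k : nat) (u v : 'cV[R]_k) : R := \sum_(i < k) u i 0 * v i 0.

Variable n : nat.
Notation E := 'cV[R]_n.

Definition is_cone (K : set E) : Prop :=
  forall x t, K x -> 0 <= t -> K (t *: x).
Definition is_convex (K : set E) : Prop :=
  forall x y t, K x -> K y -> 0 <= t -> t <= 1 -> K (t *: x + (1 - t) *: y).
Definition closed_convex_cone (K : set E) : Prop :=
  [/\ K 0, is_cone K, is_convex K & closed K].

Definition dual (K : set E) : set E := [set z | forall x, K x -> 0 <= ip z x].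
Definition orthc (F : set E) : set E := [set z | forall x, F x -> ip z x = 0].
Definition hperp (s : E) : set E := [set x | ip s x = 0].
Definition lin_of (s : E) : set E := [set a *: s | a in [set: R]].
Definition mink_sum (A B : set E) : set E := [set a + b | a in A & b in B].

Fixpoint faces (K : set E) (s : nat -> E) (i : nat) : set E :=
  match i with
  | 0 => K
  | i'.+1 => faces K s i' `&` hperp (s i')
  end.

Variable m : nat.
Variables (A : 'M[R]_(n, m)) (c : E) (b : 'cV[R]_m).

Definition feasP (C : set E) (y : 'cV[R]_m) : Prop := C (c - A *m y).
Definition optP (C : set E) (y : 'cV[R]_m) : Prop :=
  feasP C y /\ forall y', feasP C y' -> ip b y' <= ip b y.
Definition feasD (C : set E) (x : E) : Prop := A^T *m x = b /\ dual C x.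
Definition optD (C : set E) (x : E) : Prop :=
  feasD C x /\ forall x', feasD C x' -> ip c x <= ip c x'.

(* Recovery procedure (nondeterministic in the choice of alpha).
   [reach K s N x i z] : z is a possible value of the current iterate just
   before step i-1 is performed (i.e. after steps N-1, ..., i), starting
   from input x. *)
Inductive reach (K : set E) (s : nat -> E) (N : nat) (x : E) : nat -> E -> Prop :=
  | reach_start : reach K s N x N x
  | reach_step : forall i z (a : R), (i < N)%N -> reach K s N x i.+1 z ->
      dual (faces K s i) (z + a *: s i) -> reach K s N x i (z + a *: s i).

(* the procedure succeeds: no run ever reports failure *)
Definition rec_succeeds (K : set E) (s : nat -> E) (N : nat) (x : E) : Prop :=
  forall i z, (i < N)%N -> reach K s N x i.+1 z ->
    exists a : R, dual (faces K s i) (z + a *: s i).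

Definition rec_output (K : set E) (s : nat -> E) (N : nat) (x x' : E) : Prop :=
  reach K s N x 0 x'.

End Defs.

From HB Require Import structures.
From mathcomp Require Import all_boot all_order all_algebra.
From mathcomp Require Import all_classical all_reals all_analysis.
From mathcomp Require Import ring lra.
Set Implicit Arguments. Unset Printing Implicit Defensive.
Import Order.TTheory GRing.Theory Num.Theory.
Import numFieldNormedType.Exports.
Local Open Scope ring_scope.
Local Open Scope classical_set_scope.

(* Recovery step i is a lifting problem: the current iterate lies in
   (F_i /\ s_i^perp)^* and we need a with z + a s_i in F_i^*.  The dual of
   F_i^* + lin s_i is contained in F_i /\ s_i^perp, so by the bipolar theorem
   every such z lies in the closure of F_i^* + lin s_i, and closedness makes a
   exist.  The steps change neither A^* x nor <c, x> since A^* s_i = 0 and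
   <c, s_i> = 0, so the output is feasible for (D) with the optimal value of
   (R/D), which bounds the value of (D) from below because F is a subcone of K.
   For (2), the optimal y of (R/P) is feasible for (P), the output x is
   feasible for (D) with <c, x> = <b, y>, and weak duality makes both
   optimal. *)

Section InnerProduct.
Context {R : realType} {k : nat}.
Implicit Types (u v w : 'cV[R]_k) (a : R).

Lemma ipE u v : ip u v = (u^T *m v) 0 0.
Proof. by rewrite /ip mxE; apply: eq_bigr => i _; rewrite mxE. Qed.

Lemma ipC u v : ip u v = ip v u.
Proof. by apply: eq_bigr => i _; rewrite mulrC. Qed.

Lemma ipDl u v w : ip (u + v) w = ip u w + ip v w.
Proof. by rewrite /ip -big_split; apply: eq_bigr => i _; rewrite mxE mulrDl. Qed.

Lemma ipZl a u w : ip (a *: u) w = a * ip u w.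
Proof. by rewrite /ip mulr_sumr; apply: eq_bigr => i _; rewrite mxE mulrA. Qed.

Lemma ipNl u w : ip (- u) w = - ip u w.
Proof. by rewrite -scaleN1r ipZl mulN1r. Qed.

Lemma ip0l w : ip 0 w = 0.
Proof. by rewrite -(scale0r 0) ipZl mul0r. Qed.

Lemma ipDr u v w : ip w (u + v) = ip w u + ip w v.
Proof. by rewrite ipC ipDl !(ipC _ w). Qed.

Lemma ipZr a u w : ip w (a *: u) = a * ip w u.
Proof. by rewrite ipC ipZl ipC. Qed.

Lemma ipNr u w : ip w (- u) = - ip w u.
Proof. by rewrite ipC ipNl ipC. Qed.

Lemma ipBr u v w : ip w (u - v) = ip w u - ip w v.
Proof. by rewrite ipDr ipNr. Qed.

Lemma ip0r w : ip w 0 = 0.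
Proof. by rewrite ipC ip0l. Qed.

Lemma ipvvN u : ip (- u) (- u) = ip u u.
Proof. by rewrite ipNl ipNr opprK. Qed.

Lemma ipvvD u v : ip (u + v) (u + v) = ip u u + 2 * ip u v + ip v v.
Proof. by rewrite ipDl !ipDr (ipC v u); ring. Qed.

Lemma ipvv_ge0 u : 0 <= ip u u.
Proof. by apply: sumr_ge0 => i _; rewrite -expr2 sqr_ge0. Qed.

Lemma ipvv_eq0 u : ip u u = 0 -> u = 0.
Proof.
move=> /psumr_eq0P u0; apply/matrixP => i j; rewrite ord1 mxE.
have /eqP : u i 0 * u i 0 = 0 by apply: u0 => // l _; rewrite -expr2 sqr_ge0.
by rewrite mulf_eq0 orbb => /eqP.
Qed.

Lemma continuous_ip u : continuous (ip u).
Proof.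
apply: continuous_big => [|i _]; first exact: add_continuous.
by move=> x; apply: continuousM; [exact: cst_continuous | exact: coord_continuous].
Qed.

Lemma continuous_ipvv : continuous (fun v => ip v v).
Proof.
apply: continuous_big => [|i _]; first exact: add_continuous.
by move=> x; apply: continuousM; exact: coord_continuous.
Qed.

End InnerProduct.

Lemma ip_trmx (R : realType) n m (A : 'M[R]_(n, m)) x y :
  ip (A^T *m x) y = ip x (A *m y).
Proof. by rewrite !ipE trmx_mul trmxK mulmxA. Qed.

Section Cones.
Context {R : realType} {n : nat}.
Implicit Types (C F : set 'cV[R]_n) (p s z : 'cV[R]_n).

Lemma dualS C F : C `<=` F -> dual F `<=` dual C.
Proof. by move=> CF z zF x /CF; exact: zF. Qed.

Lemma closed_hperp s : closed (hperp s).
Proof.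
apply: (@preimage_closed _ _ (ip s) [set 0]); last exact: closed_eq.
by move=> x _; exact: continuous_ip.
Qed.

Lemma cV_box_compact (M : 'I_n -> R) :
  compact [set v : 'cV[R]_n | forall i, `|v i 0| <= M i].
Proof.
have -> : [set v : 'cV[R]_n | forall i, `|v i 0| <= M i] =
    (fun v : 'rV[R]_n => v^T) @` [set v : 'rV[R]_n | forall i, `[- M i, M i] (v ord0 i)].
  apply/seteqP; split => [v vM | _ [v vM <-] i].
    by exists v^T; rewrite ?trmxK // => i; rewrite /= in_itv /= -ler_norml mxE.
  by move: (vM i); rewrite /= in_itv /= -ler_norml mxE.
have trmx_continuous : continuous (fun v : 'rV[R]_n => v^T).
  move=> v B /nbhs_ballP [e e0 eB]; apply/nbhs_ballP; exists e => //= w [_ vw].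
  by apply: eB; split=> // i j; rewrite !mxE.
have box_compact :
    compact [set v : 'rV[R]_n | forall i, `[- M i, M i]%classic (v ord0 i)].
  by apply: (@rV_compact _ _ (fun i => `[- M i, M i]%classic)) => i; exact: segment_compact.
exact: continuous_compact (continuous_subspaceT trmx_continuous) box_compact.
Qed.

Lemma nearest_point C z p0 : C p0 -> closed C ->
  exists2 p, C p & forall w, C w -> ip (z - p) (z - p) <= ip (z - w) (z - w).
Proof.
move=> Cp0 Ccl; pose d (w : 'cV[R]_n) := ip (z - w) (z - w); pose D := d p0.
have d_cont : continuous d.
  move=> w.
  have sub_cont : {for w, continuous (fun v : 'cV[R]_n => z - v)}.
    by apply: (@continuousB _ _ _ (fun=> z) id); [exact: cst_continuous | exact: cvg_id].
  exact: continuous_comp sub_cont (@continuous_ipvv _ _ (z - w)).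
pose S := C `&` d @^-1` [set r | r <= D].
have S_closed : closed S.
  apply: closedI => //; apply: preimage_closed; last exact: closed_le.
  by move=> w _; exact: d_cont.
pose M i := `|z i 0| + 1 + D.
have S_box : S `<=` [set v | forall i, `|v i 0| <= M i].
  move=> v [_ dv] i /=.
  have coord_le : (z i 0 - v i 0) * (z i 0 - v i 0) <= D.
    apply: le_trans dv; rewrite /d /ip (bigD1 i) //= !mxE lerDl.
    by apply: sumr_ge0 => j _; rewrite -expr2 sqr_ge0.
  have D_ge0 : 0 <= D by exact: ipvv_ge0.
  have := ler_norm (z i 0); have := ler_norm (- z i 0); rewrite normrN.
  rewrite ler_norml /M; nra.
have S_compact : compact S.
  exact: subclosed_compact S_closed (@cV_box_compact M) S_box.
have S_p0 : S p0 by split; last exact: lexx.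
have [p /set_mem [Cp _] pmin] :=
  compact_EVT_min (ex_intro _ p0 S_p0) S_compact (continuous_subspaceT d_cont).
exists p => // w Cw; have [dw|Ddw] := leP (d w) D.
  by apply: pmin; apply/mem_set.
exact: le_trans (pmin p0 (mem_set S_p0)) (ltW Ddw).
Qed.

Lemma nearest_point_obtuse C z p : is_convex C -> C p ->
    (forall w, C w -> ip (z - p) (z - p) <= ip (z - w) (z - w)) ->
  forall w, C w -> 0 <= ip (p - z) (w - p).
Proof.
move=> Cconv Cp pmin w Cw; rewrite leNgt; apply/negP => a_lt0.
set a := ip (p - z) (w - p) in a_lt0; set d := ip (w - p) (w - p).
have d_ge0 : 0 <= d by exact: ipvv_ge0.
pose t := - a / (d - a).
have t_eq : t * (d - a) = - a by rewrite divfK // gt_eqF //; lra.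
have t_gt0 : 0 < t by rewrite divr_gt0 //; lra.
have t_le1 : t <= 1 by rewrite ler_pdivrMr ?mul1r; lra.
have := pmin _ (Cconv _ _ _ Cw Cp (ltW t_gt0) t_le1).
have -> : z - (t *: w + (1 - t) *: p) = - ((p - z) + t *: (w - p)).
  by apply/matrixP => i j; rewrite !mxE; ring.
rewrite -opprB !ipvvN ipvvD ipZr ipZl ipZr -/a -/d; nra.
Qed.

Lemma bipolar C : closed_convex_cone C -> dual (dual C) `<=` C.
Proof.
case=> C0 Ccone Cconv Ccl z zCC.
have [p Cp pmin] := nearest_point z 0 C0 Ccl.
have obtuse := nearest_point_obtuse z p Cconv Cp pmin.
pose h := p - z.
have hp0 : ip h p = 0.
  have := obtuse 0 C0; have := obtuse (2 *: p) (Ccone _ _ Cp (ler0n _ 2)).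
  by rewrite sub0r ipNr scalerDl scale1r addrK; lra.
have hC : dual C h by move=> w Cw; have := obtuse w Cw; rewrite ipBr hp0 subr0.
have hh0 : ip h h = 0.
  apply/eqP; rewrite eq_le ipvv_ge0 andbT.
  have z_eq : z = p - h by rewrite /h opprB addrC subrK.
  by have := zCC h hC; rewrite ipC z_eq ipBr hp0 sub0r oppr_ge0.
by move: (ipvv_eq0 hh0) => /eqP; rewrite subr_eq0 => /eqP <-.
Qed.

Lemma closed_convex_cone_hperp F s :
  closed_convex_cone F -> closed_convex_cone (F `&` hperp s).
Proof.
case=> F0 Fcone Fconv Fcl; split.
- by split => //; rewrite /hperp /= ip0r.
- by move=> x t [Fx sx] t0; split; [exact: Fcone | rewrite /hperp /= ipZr sx mulr0].
- move=> x y t [Fx sx] [Fy sy] t0 t1; split; first exact: Fconv.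
  by rewrite /hperp /= ipDr !ipZr sx sy !mulr0 addr0.
- exact: closedI Fcl (@closed_hperp s).
Qed.

Lemma dual0 F : dual F 0.
Proof. by move=> x _; rewrite ip0l. Qed.

Lemma mink_sum_dual_lin F s u a :
  dual F u -> mink_sum (dual F) (lin_of s) (u + a *: s).
Proof. by move=> uF; exists u => //; exists (a *: s) => //; exists a. Qed.

Lemma closed_convex_cone_dual_lin F s :
  closed (mink_sum (dual F) (lin_of s)) ->
  closed_convex_cone (mink_sum (dual F) (lin_of s)).
Proof.
move=> Ccl; split => //.
- by have := mink_sum_dual_lin s 0 (dual0 F); rewrite scale0r addr0.
- move=> _ t [u uF [_ [a _ <-] <-]] t0.
  rewrite scalerDr scalerA; apply: mink_sum_dual_lin => x Fx.
  by rewrite ipZl mulr_ge0 ?uF.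
- move=> _ _ t [u1 u1F [_ [a1 _ <-] <-]] [u2 u2F [_ [a2 _ <-] <-]] t0 t1.
  have -> : t *: (u1 + a1 *: s) + (1 - t) *: (u2 + a2 *: s) =
      (t *: u1 + (1 - t) *: u2) + (t * a1 + (1 - t) * a2) *: s.
    by apply/matrixP => i j; rewrite !mxE; ring.
  apply: mink_sum_dual_lin => x Fx.
  by rewrite ipDl !ipZl addr_ge0 // mulr_ge0 ?u1F ?u2F ?subr_ge0.
Qed.

Lemma dual_mink_sum_dual_lin F s : closed_convex_cone F ->
  dual (mink_sum (dual F) (lin_of s)) `<=` F `&` hperp s.
Proof.
move=> Fccc h hC; have lin_sub a : mink_sum (dual F) (lin_of s) (a *: s).
  by rewrite -[a *: s]add0r; apply: mink_sum_dual_lin; exact: dual0.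
split.
  apply: (bipolar Fccc) => u uF; apply: hC.
  by rewrite -[u]addr0 -(scale0r s); exact: mink_sum_dual_lin.
have := hC _ (lin_sub 1); have := hC _ (lin_sub (-1)).
by rewrite /hperp /= scale1r scaleN1r ipNr ipC; lra.
Qed.

Lemma dual_hperp_lift F s z :
  closed_convex_cone F -> closed (mink_sum (dual F) (lin_of s)) ->
  dual (F `&` hperp s) z -> exists a, dual F (z + a *: s).
Proof.
move=> Fccc Ccl zd.
have [u uF [_ [a _ <-] z_eq]] : mink_sum (dual F) (lin_of s) z.
  apply: (bipolar (closed_convex_cone_dual_lin Ccl)).
  by apply: dualS zd; exact: dual_mink_sum_dual_lin.
by exists (- a); rewrite -z_eq scaleNr addrK.
Qed.

End Cones.

Section WeakDuality.
Context {R : realType} {n m : nat}.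
Variables (A : 'M[R]_(n, m)) (c : 'cV[R]_n) (b : 'cV[R]_m) (C : set 'cV[R]_n).

Lemma weak_duality y x : feasP A c C y -> feasD A b C x -> ip b y <= ip c x.
Proof.
by move=> yC [<- xC]; rewrite ip_trmx [ip c x]ipC -subr_ge0 -ipBr; exact: xC.
Qed.

Lemma optimal_of_zero_gap y x : feasP A c C y -> feasD A b C x ->
  ip c x = ip b y -> optP A c b C y /\ optD A c b C x.
Proof.
move=> yC xC gap; split.
  by split => // y' y'C; rewrite -gap; exact: weak_duality y'C xC.
by split => // x' x'C; rewrite gap; exact: weak_duality yC x'C.
Qed.

End WeakDuality.

Section Recovery.
Context {R : realType} {n m : nat}.
Variables (N : nat) (K : set 'cV[R]_n) (s : nat -> 'cV[R]_n).
Variables (A : 'M[R]_(n, m)) (c : 'cV[R]_n) (b : 'cV[R]_m).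

Lemma faces_sub j : faces K s j `<=` K.
Proof. by elim: j => [|j IH] //= x [/IH]. Qed.

Lemma closed_convex_cone_faces j :
  closed_convex_cone K -> closed_convex_cone (faces K s j).
Proof. by move=> Kccc; elim: j => //= j; exact: closed_convex_cone_hperp. Qed.

Lemma reach_dual x j z :
  reach K s N x j z -> dual (faces K s N) x -> dual (faces K s j) z.
Proof. by move=> r xF; elim: r. Qed.

Hypotheses (c_s : forall i, (i < N)%N -> ip c (s i) = 0)
           (A_s : forall i, (i < N)%N -> A^T *m s i = 0).

Lemma reach_invariant x j z :
  reach K s N x j z -> A^T *m z = A^T *m x /\ ip c z = ip c x.
Proof.
elim=> [|i z' a iN _ [Az' cz'] _] //.
by rewrite mulmxDr -scalemxAr A_s // scaler0 addr0 ipDr ipZr c_s // mulr0 addr0.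
Qed.

Lemma rec_output_feasD x x' : feasD A b (faces K s N) x ->
  rec_output K s N x x' -> feasD A b K x' /\ ip c x' = ip c x.
Proof.
move=> [Ax xF] r; have [Ax' cx'] := reach_invariant r.
by split => //; split; [rewrite Ax' | exact: reach_dual r xF].
Qed.

Lemma rec_output_optD x x' : optD A c b (faces K s N) x ->
  rec_output K s N x x' -> optD A c b K x'.
Proof.
move=> [xF xmin] r; have [x'K cx'] := rec_output_feasD xF r.
split => // x'' [Ax'' x''K]; rewrite cx'; apply: xmin; split => // y.
by move=> /faces_sub; exact: x''K.
Qed.

End Recovery.

Theorem lemma8 (R : realType) (n m N : nat) (K : set 'cV[R]_n)
  (A : 'M[R]_(n, m)) (c : 'cV[R]_n) (b : 'cV[R]_m) (s : nat -> 'cV[R]_n) :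
  closed_convex_cone K ->
  (forall i, (i < N)%N -> ip c (s i) = 0) ->
  (forall i, (i < N)%N -> A^T *m s i = 0) ->
  (forall i, (i < N)%N ->
     dual (faces K s i) (s i) /\ ~ orthc (faces K s i) (s i)) ->
  (* (1) *)
  ((forall i, (i < N)%N -> closed (mink_sum (dual (faces K s i)) (lin_of (s i)))) ->
   forall x, optD A c b (faces K s N) x ->
     rec_succeeds K s N x /\
     (forall x', rec_output K s N x x' -> optD A c b K x'))
  /\
  (* (2) *)
  (forall (y : 'cV[R]_m) (x : 'cV[R]_n),
     optP A c b (faces K s N) y -> optD A c b (faces K s N) x ->
     ip c x = ip b y ->
     (exists x', rec_output K s N x x') ->
     exists (y' : 'cV[R]_m) (x' : 'cV[R]_n),
       optP A c b K y' /\ optD A c b K x' /\ ip c x' = ip b y').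
Proof.
(* The conditions s_i in F_i^* \ F_i^perp only make the faces strictly
   decreasing; neither conclusion needs them. *)
move=> Kccc c_s A_s _; split.
  move=> lin_closed x xopt; split=> [i z iN r | x'].
    apply: dual_hperp_lift (closed_convex_cone_faces s i Kccc) (lin_closed i iN) _.
    exact: reach_dual r xopt.1.2.
  exact: (rec_output_optD c_s A_s xopt).
move=> y x [yF _] [xF _] gap [x' r].
have [x'K cx'] := rec_output_feasD c_s A_s xF r.
have yK : feasP A c K y by apply: faces_sub yF.
exists y, x'; rewrite cx' gap.
by have [yopt x'opt] := optimal_of_zero_gap yK x'K (etrans cx' gap).
Qed.
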